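(* Let $(X_1,\le_1)$, $(X_2,\le_2)$ be partially ordered sets with directed completions $(\overline X_1,\iota_1)$, $(\overline X_2,\iota_2)$. Then the directed completion of $X_1\times X_2$ with the product order is $\overline X_1\times\overline X_2$ with the product order, together with the map $(x_1,x_2)\mapsto(\iota_1(x_1),\iota_2(x_2))$.
   Context: The product order on $X_1\times X_2$: $(a_1,a_2)\le(b_1,b_2)$ iff $a_1\le_1b_1$ and $a_2\le_2b_2$. A subset $D$ of a partially ordered set is directed if every finite subset of $D$ (including the empty one) has an upper bound in $D$. A partially ordered set is a dcpo if every directed subset has a supremum. A map $T$ between partially ordered sets has the Monotone Convergence Property (Mcp) if for every directed $D$ having a supremum, $T(D)$ has a supremum and $T(\sup D)=\sup T(D)$. A directed completion of $(X,\le)$ is a dcpo $(\overline X,\bar\le)$ together with a map $\iota:X\to\overline X$ with the Mcp such that for every dcpo $Z$ and every map $T:X\to Z$ with the Mcp there is a unique map $\bar T:\overline X\to Z$ with the Mcp satisfying $\bar T\circ\iota=T$. *)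

From Stdlib Require Import List.
Import ListNotations.
Set Implicit Arguments.

Record Poset := {
  car :> Type;
  le : car -> car -> Prop;
  le_refl : forall x, le x x;
  le_trans : forall x y z, le x y -> le y z -> le x z;
  le_antisym : forall x y, le x y -> le y x -> x = y
}.

Arguments le {p} _ _.

Definition prod_le {X1 X2 : Poset} (a b : X1 * X2) : Prop :=
  le (fst a) (fst b) /\ le (snd a) (snd b).

Lemma prod_le_refl {X1 X2 : Poset} (x : X1 * X2) : prod_le x x.
Proof. split; apply le_refl. Qed.

Lemma prod_le_trans {X1 X2 : Poset} (x y z : X1 * X2) :
  prod_le x y -> prod_le y z -> prod_le x z.
Proof. intros [H1 H2] [H3 H4]; split; eapply le_trans; eauto. Qed.

Lemma prod_le_antisym {X1 X2 : Poset} (x y : X1 * X2) :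
  prod_le x y -> prod_le y x -> x = y.
Proof.
  destruct x, y; intros [H1 H2] [H3 H4]; simpl in *.
  f_equal; apply le_antisym; auto.
Qed.

Definition prodP (X1 X2 : Poset) : Poset :=
  {| car := X1 * X2; le := @prod_le X1 X2;
     le_refl := @prod_le_refl X1 X2;
     le_trans := @prod_le_trans X1 X2;
     le_antisym := @prod_le_antisym X1 X2 |}.

(* D is directed: every finite subset of D (including the empty one)
   has an upper bound in D. Finite subsets are given by lists. *)
Definition directed {X : Poset} (D : X -> Prop) : Prop :=
  forall l : list X, (forall x, In x l -> D x) ->
    exists u, D u /\ forall x, In x l -> le x u.

Definition is_sup {X : Poset} (D : X -> Prop) (s : X) : Prop :=
  (forall x, D x -> le x s) /\
  (forall u, (forall x, D x -> le x u) -> le s u).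

Definition dcpo (X : Poset) : Prop :=
  forall D : X -> Prop, directed D -> exists s, is_sup D s.

Definition image {X Y : Poset} (T : X -> Y) (D : X -> Prop) : Y -> Prop :=
  fun y => exists x, D x /\ T x = y.

(* Monotone Convergence Property: for every directed D having a supremum,
   T(D) has a supremum and T(sup D) = sup T(D). *)
Definition Mcp {X Y : Poset} (T : X -> Y) : Prop :=
  forall D : X -> Prop, directed D -> forall s, is_sup D s ->
    is_sup (image T D) (T s).

Definition directed_completion {X Xb : Poset} (iota : X -> Xb) : Prop :=
  dcpo Xb /\ Mcp iota /\
  forall (Z : Poset), dcpo Z -> forall T : X -> Z, Mcp T ->
    exists Tb : Xb -> Z, (Mcp Tb /\ forall x, Tb (iota x) = T x) /\
      forall Tb' : Xb -> Z, Mcp Tb' -> (forall x, Tb' (iota x) = T x) ->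
        forall y, Tb' y = Tb y.

(* A map on a product of posets has the Mcp iff it has the Mcp in each variable
   separately.  So a Mcp map T on X1 x X2 is extended first in its first argument along
   iota1 (one extension for each x2), then in its second argument along iota2.  This
   works because extending along a directed completion preserves the Mcp in a remaining
   parameter, which is proved by induction over the completion: a property holding on
   the image of iota and closed under directed suprema holds everywhere, since it carves
   out a sub-dcpo through which iota factors.  Uniqueness follows from the same
   induction, applied in each variable. *)

From Stdlib Require Import List ProofIrrelevance ClassicalEpsilon.
Import ListNotations.

Lemma is_sup_unique {X : Poset} (D : X -> Prop) s t : is_sup D s -> is_sup D t -> s = t.
Proof. intros [Hs1 Hs2] [Ht1 Ht2]; apply le_antisym; auto. Qed.

Lemma is_sup_ext {X : Poset} (D D' : X -> Prop) s :
  (forall y, D y <-> D' y) -> is_sup D s -> is_sup D' s.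
Proof.
  intros E [Hub Hleast]; split.
  - intros x Hx; apply Hub, E, Hx.
  - intros u Hu; apply Hleast; intros x Hx; apply Hu, E, Hx.
Qed.

Lemma image_comp {X Y Z : Poset} (f : X -> Y) (g : Y -> Z) (D : X -> Prop) z :
  image g (image f D) z <-> image (fun x => g (f x)) D z.
Proof.
  split.
  - intros [y [[x [Dx <-]] <-]]; exists x; auto.
  - intros [x [Dx <-]]; exists (f x); split; [exists x; auto | reflexivity].
Qed.

Lemma directed_nonempty {X : Poset} (D : X -> Prop) : directed D -> exists x, D x.
Proof. intros HD; destruct (HD nil) as [u [Du _]]; [intros x [] | eauto]. Qed.

Lemma list_in_image {A B : Type} (f : A -> B) (Q : A -> Prop) (l : list B) :
  (forall y, In y l -> exists a, Q a /\ f a = y) ->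
  exists l', (forall a, In a l' -> Q a) /\ map f l' = l.
Proof.
  induction l as [|y l IH]; intros Hl.
  - exists nil; split; [intros a [] | reflexivity].
  - destruct (Hl y (or_introl eq_refl)) as [a [Qa <-]].
    destruct IH as [l' [Hl' <-]]; [intros z Hz; apply Hl; right; exact Hz |].
    exists (a :: l'); split; [intros b [<- | Hb]; auto | reflexivity].
Qed.

Lemma directed_image {X Y : Poset} (f : X -> Y) (D : X -> Prop) :
  (forall a b, le a b -> le (f a) (f b)) -> directed D -> directed (image f D).
Proof.
  intros Hmono HD l Hl.
  destruct (list_in_image f D l Hl) as [l' [Hl' <-]].
  destruct (HD l' Hl') as [u [Du Hu]].
  exists (f u); split; [exists u; auto |].
  intros y Hy; apply in_map_iff in Hy as [a [<- Ha]]; apply Hmono, Hu, Ha.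
Qed.

Lemma Mcp_monotone {X Y : Poset} (T : X -> Y) :
  Mcp T -> forall a b, le a b -> le (T a) (T b).
Proof.
  intros HT a b Hab.
  pose (D := fun x : X => x = a \/ x = b).
  assert (Hle_b : forall x, D x -> le x b)
    by (intros x [-> | ->]; [exact Hab | apply le_refl]).
  assert (HD : directed D).
  { intros l Hl; exists b; split; [right; reflexivity |].
    intros x Hx; apply Hle_b, Hl, Hx. }
  assert (Hsup : is_sup D b)
    by (split; [exact Hle_b | intros u Hu; apply Hu; right; reflexivity]).
  apply (proj1 (HT D HD b Hsup)); exists a; split; [left |]; reflexivity.
Qed.

Lemma Mcp_id {X : Poset} : Mcp (fun x : X => x).
Proof.
  intros D _ s Hs; apply (is_sup_ext D); [| exact Hs].
  intros y; split; [intros Dy; exists y; auto | intros [x [Dx <-]]; exact Dx].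
Qed.

Lemma Mcp_comp {X Y Z : Poset} (f : X -> Y) (g : Y -> Z) :
  Mcp f -> Mcp g -> Mcp (fun x => g (f x)).
Proof.
  intros Hf Hg D HD s Hs.
  assert (HfD : directed (image f D)) by (apply directed_image; [apply Mcp_monotone |]; auto).
  apply (is_sup_ext (image g (image f D))); [apply image_comp |].
  exact (Hg _ HfD _ (Hf D HD s Hs)).
Qed.

Lemma is_sup_const {X Y : Poset} (D : X -> Prop) (c : Y) :
  directed D -> is_sup (image (fun _ => c) D) c.
Proof.
  intros HD; destruct (directed_nonempty D HD) as [x Dx]; split.
  - intros y [x' [_ <-]]; apply le_refl.
  - intros u Hu; apply Hu; exists x; auto.
Qed.

Definition sub_le {X : Poset} (P : X -> Prop) (a b : {x : X | P x}) : Prop :=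
  le (proj1_sig a) (proj1_sig b).

Lemma sub_le_antisym {X : Poset} (P : X -> Prop) a b :
  sub_le P a b -> sub_le P b a -> a = b.
Proof.
  destruct a as [a Pa], b as [b Pb]; unfold sub_le; simpl; intros Hab Hba.
  assert (a = b) as <- by (apply le_antisym; auto).
  f_equal; apply proof_irrelevance.
Qed.

Definition subP (X : Poset) (P : X -> Prop) : Poset :=
  {| car := {x : X | P x}; le := sub_le P;
     le_refl := fun a => @le_refl X (proj1_sig a);
     le_trans := fun a b c => @le_trans X (proj1_sig a) (proj1_sig b) (proj1_sig c);
     le_antisym := sub_le_antisym P |}.

Section SubPoset.

Context {X : Poset} (P : X -> Prop).

Let val : subP X P -> X := @proj1_sig X P.

Lemma is_sup_sub (D : subP X P -> Prop) t (Pt : P t) :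
  is_sup (image val D) t -> is_sup D (exist _ t Pt : subP X P).
Proof.
  intros [Hub Hleast]; split.
  - intros x Dx; apply Hub; exists x; auto.
  - intros u Hu; apply Hleast; intros y [x [Dx <-]]; apply Hu, Dx.
Qed.

Lemma directed_image_val (D : subP X P -> Prop) : directed D -> directed (image val D).
Proof. apply directed_image; auto. Qed.

Lemma Mcp_corestrict {Y : Poset} (f : Y -> X) (Pf : forall y, P (f y)) :
  Mcp f -> Mcp (fun y => exist _ (f y) (Pf y) : subP X P).
Proof.
  intros Hf D HD s Hs; apply is_sup_sub.
  apply (is_sup_ext (image f D)); [| exact (Hf D HD s Hs)].
  intros x; symmetry; exact (image_comp (X := Y) (Y := subP X P) _ val D x).
Qed.

Hypotheses (dcpoX : dcpo X) (closedP :
  forall D, directed D -> (forall d, D d -> P d) -> forall s, is_sup D s -> P s).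

Lemma sup_in_closed (D : subP X P -> Prop) :
  directed D -> exists t (Pt : P t),
    is_sup (image val D) t /\ is_sup D (exist _ t Pt : subP X P).
Proof.
  intros HD; destruct (dcpoX _ (directed_image_val D HD)) as [t Ht].
  assert (Pt : P t).
  { apply (closedP _ (directed_image_val D HD)); [| exact Ht].
    intros x [a [_ <-]]; exact (proj2_sig a). }
  exists t, Pt; split; [exact Ht | apply is_sup_sub, Ht].
Qed.

Lemma dcpo_sub : dcpo (subP X P).
Proof. intros D HD; destruct (sup_in_closed D HD) as [t [Pt [_ Hsup]]]; eauto. Qed.

Lemma Mcp_val : Mcp val.
Proof.
  intros D HD s Hs; destruct (sup_in_closed D HD) as [t [Pt [Ht Hsup]]].
  rewrite (is_sup_unique D s _ Hs Hsup); exact Ht.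
Qed.

End SubPoset.

Section DirectedCompletion.

Context {X Xb : Poset} {iota : X -> Xb}.
Hypothesis completion : directed_completion iota.

(* P carves out a sub-dcpo through which iota factors; the induced extension of that
   factorization, followed by the inclusion, extends iota and is therefore the identity. *)
Lemma directed_completion_ind (P : Xb -> Prop) :
  (forall x, P (iota x)) ->
  (forall D, directed D -> (forall d, D d -> P d) -> forall s, is_sup D s -> P s) ->
  forall y, P y.
Proof.
  destruct completion as [dcpoXb [Mcp_iota ext]]; intros Piota closedP y.
  destruct (ext (subP Xb P) (dcpo_sub P dcpoXb closedP) _
              (Mcp_corestrict P iota Piota Mcp_iota)) as [e [[Mcp_e He] _]].
  destruct (ext Xb dcpoXb iota Mcp_iota) as [Tb [_ Huniq]].
  assert (Hid : y = Tb y) by (apply (Huniq (fun z => z)); [apply Mcp_id | reflexivity]).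
  assert (He_id : proj1_sig (e y) = Tb y).
  { apply (Huniq (fun z => proj1_sig (e z))).
    - exact (Mcp_comp _ _ Mcp_e (Mcp_val P dcpoXb closedP)).
    - intros x; rewrite He; reflexivity. }
  rewrite Hid, <- He_id; exact (proj2_sig (e y)).
Qed.

Lemma directed_completion_ext_unique {Z : Poset} (f g : Xb -> Z) :
  Mcp f -> Mcp g -> (forall x, f (iota x) = g (iota x)) -> forall y, f y = g y.
Proof.
  intros Hf Hg Hfg; apply directed_completion_ind; [exact Hfg |].
  intros D HD Heq s Hs; apply (is_sup_unique (image f D)); [exact (Hf D HD s Hs) |].
  apply (is_sup_ext (image g D)); [| exact (Hg D HD s Hs)].
  intros z; split; intros [x [Dx <-]]; exists x; split; auto.
  symmetry; apply Heq, Dx.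
Qed.

Lemma extension_monotone_in_param {B Z : Poset} (F : B -> X -> Z) (Fb : B -> Xb -> Z) :
  (forall b, Mcp (Fb b)) -> (forall b x, Fb b (iota x) = F b x) ->
  (forall x b b', le b b' -> le (F b x) (F b' x)) ->
  forall b b', le b b' -> forall y, le (Fb b y) (Fb b' y).
Proof.
  intros HFb Hext HF b b' Hbb'; apply directed_completion_ind.
  - intros x; rewrite !Hext; apply HF, Hbb'.
  - intros D HD Hle s Hs; apply (proj2 (HFb b D HD s Hs)).
    intros z [d [Dd <-]]; apply le_trans with (Fb b' d); [apply Hle, Dd |].
    apply (Mcp_monotone _ (HFb b')), (proj1 Hs), Dd.
Qed.

(* The supremum over the parameter commutes with the supremum over y because Fb b is
   monotone; the base case is the Mcp of F in its parameter. *)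
Lemma extension_Mcp_in_param {B Z : Poset} (F : B -> X -> Z) (Fb : B -> Xb -> Z) :
  (forall b, Mcp (Fb b)) -> (forall b x, Fb b (iota x) = F b x) ->
  (forall x, Mcp (fun b => F b x)) ->
  forall y, Mcp (fun b => Fb b y).
Proof.
  intros HFb Hext HF.
  assert (Hmono := extension_monotone_in_param F Fb HFb Hext
                     (fun x => Mcp_monotone _ (HF x))).
  intros y DB HDB sB HsB; revert y; apply directed_completion_ind.
  - intros x; rewrite Hext; apply (is_sup_ext (image (fun b => F b x) DB));
      [| exact (HF x DB HDB sB HsB)].
    intros z; split; intros [b [Db <-]]; exists b; split; auto.
  - intros D HD HsupD s Hs; split.
    + intros z [b [Db <-]]; apply Hmono, (proj1 HsB), Db.
    + intros u Hu; apply (proj2 (HFb sB D HD s Hs)).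
      intros z [d [Dd <-]]; apply (proj2 (HsupD d Dd)).
      intros w [b [Db <-]]; apply le_trans with (Fb b s).
      * apply (Mcp_monotone _ (HFb b)), (proj1 Hs), Dd.
      * apply Hu; exists b; auto.
Qed.

Lemma directed_completion_ext_param {B Z : Poset} (F : B -> X -> Z) :
  dcpo Z -> (forall b, Mcp (F b)) -> (forall x, Mcp (fun b => F b x)) ->
  exists Fb : B -> Xb -> Z,
    (forall b, Mcp (Fb b)) /\ (forall b x, Fb b (iota x) = F b x) /\
    (forall y, Mcp (fun b => Fb b y)).
Proof.
  destruct completion as [_ [_ ext]]; intros dcpoZ HF HFparam.
  destruct (choice (fun b (g : Xb -> Z) => Mcp g /\ forall x, g (iota x) = F b x))
    as [Fb HFb]; [intros b; destruct (ext Z dcpoZ (F b) (HF b)) as [g [Hg _]]; eauto |].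
  exists Fb; split; [| split]; try (intros; apply HFb).
  apply (extension_Mcp_in_param F); [intros; apply HFb.. | exact HFparam].
Qed.

End DirectedCompletion.

Section Product.

Context {Y1 Y2 : Poset}.

Definition fst_image (D : prodP Y1 Y2 -> Prop) : Y1 -> Prop := image (X := prodP Y1 Y2) fst D.
Definition snd_image (D : prodP Y1 Y2 -> Prop) : Y2 -> Prop := image (X := prodP Y1 Y2) snd D.

Lemma is_sup_fst_image (D : prodP Y1 Y2 -> Prop) s :
  is_sup D s -> is_sup (fst_image D) (fst s).
Proof.
  intros [Hub Hleast]; split.
  - intros x [d [Dd <-]]; apply (Hub d Dd).
  - intros u Hu; refine (proj1 (Hleast (u, snd s) _)).
    intros d Dd; split; [apply Hu; exists d; auto | apply (Hub d Dd)].
Qed.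

Lemma is_sup_snd_image (D : prodP Y1 Y2 -> Prop) s :
  is_sup D s -> is_sup (snd_image D) (snd s).
Proof.
  intros [Hub Hleast]; split.
  - intros x [d [Dd <-]]; apply (Hub d Dd).
  - intros u Hu; refine (proj2 (Hleast (fst s, u) _)).
    intros d Dd; split; [apply (Hub d Dd) | apply Hu; exists d; auto].
Qed.

Lemma is_sup_pair (D : prodP Y1 Y2 -> Prop) s1 s2 :
  is_sup (fst_image D) s1 -> is_sup (snd_image D) s2 ->
  is_sup D ((s1, s2) : prodP Y1 Y2).
Proof.
  intros [Hub1 Hleast1] [Hub2 Hleast2]; split.
  - intros d Dd; split; [apply Hub1 | apply Hub2]; exists d; auto.
  - intros u Hu; split; [apply Hleast1 | apply Hleast2];
      intros y [d [Dd <-]]; apply Hu, Dd.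
Qed.

Lemma directed_fst_image (D : prodP Y1 Y2 -> Prop) : directed D -> directed (fst_image D).
Proof. apply directed_image; intros a b [H _]; exact H. Qed.

Lemma directed_snd_image (D : prodP Y1 Y2 -> Prop) : directed D -> directed (snd_image D).
Proof. apply directed_image; intros a b [_ H]; exact H. Qed.

Lemma dcpo_prod : dcpo Y1 -> dcpo Y2 -> dcpo (prodP Y1 Y2).
Proof.
  intros dcpo1 dcpo2 D HD.
  destruct (dcpo1 _ (directed_fst_image D HD)) as [s1 Hs1].
  destruct (dcpo2 _ (directed_snd_image D HD)) as [s2 Hs2].
  exists (s1, s2); apply is_sup_pair; assumption.
Qed.

Lemma Mcp_pairl (y2 : Y2) : Mcp (fun y1 : Y1 => (y1, y2) : prodP Y1 Y2).
Proof.
  intros D HD s Hs; apply is_sup_pair; unfold fst_image, snd_image.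
  - apply (is_sup_ext D); [| exact Hs].
    intros y; rewrite image_comp; split;
      [intros Dy; exists y; auto | intros [x [Dx <-]]; exact Dx].
  - apply (is_sup_ext (image (fun _ => y2) D)); [| exact (is_sup_const D y2 HD)].
    intros y; rewrite image_comp; reflexivity.
Qed.

Lemma Mcp_pairr (y1 : Y1) : Mcp (fun y2 : Y2 => (y1, y2) : prodP Y1 Y2).
Proof.
  intros D HD s Hs; apply is_sup_pair; unfold fst_image, snd_image.
  - apply (is_sup_ext (image (fun _ => y1) D)); [| exact (is_sup_const D y1 HD)].
    intros y; rewrite image_comp; reflexivity.
  - apply (is_sup_ext D); [| exact Hs].
    intros y; rewrite image_comp; split;
      [intros Dy; exists y; auto | intros [x [Dx <-]]; exact Dx].
Qed.

(* The key step bounds f (fst d) (snd d') by an upper bound of d and d' in D. *)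
Lemma Mcp_uncurry {Z : Poset} (f : Y1 -> Y2 -> Z) :
  (forall y2, Mcp (fun y1 => f y1 y2)) -> (forall y1, Mcp (f y1)) ->
  Mcp (fun p : prodP Y1 Y2 => f (fst p) (snd p)).
Proof.
  intros Hf1 Hf2 D HD s Hs.
  pose proof (is_sup_fst_image D s Hs) as Hs1; pose proof (is_sup_snd_image D s Hs) as Hs2.
  assert (Hmono : forall a b : prodP Y1 Y2,
             le a b -> le (f (fst a) (snd a)) (f (fst b) (snd b))).
  { intros a b [Hab1 Hab2]; apply le_trans with (f (fst b) (snd a)).
    - apply (Mcp_monotone _ (Hf1 _)), Hab1.
    - apply (Mcp_monotone _ (Hf2 _)), Hab2. }
  split.
  - intros z [d [Dd <-]]; apply Hmono; split; [apply (proj1 Hs1) | apply (proj1 Hs2)];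
      exists d; auto.
  - intros u Hu; apply (proj2 (Hf1 (snd s) _ (directed_fst_image D HD) _ Hs1)).
    intros z [a [[d [Dd <-]] <-]].
    apply (proj2 (Hf2 (fst d) _ (directed_snd_image D HD) _ Hs2)).
    intros w [b [[d' [Dd' <-]] <-]].
    destruct (HD [d; d']) as [d'' [Dd'' Hd'']]; [intros x [<- | [<- | []]]; auto |].
    apply le_trans with (f (fst d'') (snd d'')); [| apply Hu; exists d''; auto].
    apply (Hmono (fst d, snd d')); split; [apply (Hd'' d) | apply (Hd'' d')]; simpl; auto.
Qed.

End Product.

Lemma Mcp_pair_map {Y1 Y2 Z1 Z2 : Poset} (f : Y1 -> Z1) (g : Y2 -> Z2) :
  Mcp f -> Mcp g -> Mcp (fun p : prodP Y1 Y2 => (f (fst p), g (snd p)) : prodP Z1 Z2).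
Proof.
  intros Hf Hg D HD s Hs; apply is_sup_pair; unfold fst_image, snd_image.
  - apply (is_sup_ext (image f (fst_image D))).
    + intros z; unfold fst_image, snd_image; rewrite !image_comp; reflexivity.
    + exact (Hf _ (directed_fst_image D HD) _ (is_sup_fst_image D s Hs)).
  - apply (is_sup_ext (image g (snd_image D))).
    + intros z; unfold fst_image, snd_image; rewrite !image_comp; reflexivity.
    + exact (Hg _ (directed_snd_image D HD) _ (is_sup_snd_image D s Hs)).
Qed.

Lemma Mcp_prod_sections {Y1 Y2 Z : Poset} (T : prodP Y1 Y2 -> Z) :
  Mcp T -> (forall y2, Mcp (fun y1 : Y1 => T (y1, y2))) /\
           (forall y1, Mcp (fun y2 : Y2 => T (y1, y2))).
Proof.
  intros HT; split; [intros y2 | intros y1]; apply Mcp_comp; auto;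
    [apply Mcp_pairl | apply Mcp_pairr].
Qed.

Section ProductCompletion.

Context {X1 X2 Xb1 Xb2 : Poset} {iota1 : X1 -> Xb1} {iota2 : X2 -> Xb2}.
Hypotheses (completion1 : directed_completion iota1) (completion2 : directed_completion iota2).

Lemma prod_completion_ext_unique {Z : Poset} (f g : prodP Xb1 Xb2 -> Z) :
  Mcp f -> Mcp g -> (forall x1 x2, f (iota1 x1, iota2 x2) = g (iota1 x1, iota2 x2)) ->
  forall y, f y = g y.
Proof.
  intros Hf Hg Hfg [y1 y2].
  destruct (Mcp_prod_sections f Hf) as [Hf1 Hf2], (Mcp_prod_sections g Hg) as [Hg1 Hg2].
  apply (directed_completion_ext_unique completion2 _ _ (Hf2 y1) (Hg2 y1)); clear y2.
  intros x2; apply (directed_completion_ext_unique completion1 _ _ (Hf1 _) (Hg1 _)).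
  intros x1; apply Hfg.
Qed.

Lemma prod_completion_ext {Z : Poset} (T : prodP X1 X2 -> Z) :
  dcpo Z -> Mcp T ->
  exists Tb : prodP Xb1 Xb2 -> Z,
    Mcp Tb /\ forall x1 x2, Tb (iota1 x1, iota2 x2) = T (x1, x2).
Proof.
  intros dcpoZ HT; destruct (Mcp_prod_sections T HT) as [HT1 HT2].
  destruct (directed_completion_ext_param completion1 (fun x2 x1 => T (x1, x2)) dcpoZ
              HT1 HT2)
    as [F1 [HF1 [HF1ext HF1param]]].
  destruct (directed_completion_ext_param completion2 (fun y1 x2 => F1 x2 y1) dcpoZ
              HF1param HF1) as [F2 [HF2 [HF2ext HF2param]]].
  exists (fun p => F2 (fst p) (snd p)); split.
  - apply Mcp_uncurry; assumption.
  - intros x1 x2; simpl; rewrite HF2ext, HF1ext; reflexivity.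
Qed.

End ProductCompletion.

Theorem mainTheorem7 (X1 X2 Xb1 Xb2 : Poset) (iota1 : X1 -> Xb1) (iota2 : X2 -> Xb2) :
  directed_completion iota1 -> directed_completion iota2 ->
  directed_completion (X := prodP X1 X2) (Xb := prodP Xb1 Xb2)
    (fun p : X1 * X2 => (iota1 (fst p), iota2 (snd p))).
Proof.
  intros C1 C2; pose proof C1 as [dcpo1 [Mcp1 _]]; pose proof C2 as [dcpo2 [Mcp2 _]].
  split; [apply dcpo_prod; assumption | split; [apply Mcp_pair_map; assumption |]].
  intros Z dcpoZ T HT.
  destruct (prod_completion_ext C1 C2 T dcpoZ HT) as [Tb [HTb HTbext]].
  exists Tb; split; [split; [exact HTb | intros [x1 x2]; apply HTbext] |].
  intros Tb' HTb' HTb'ext; apply (prod_completion_ext_unique C1 C2 _ _ HTb' HTb).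
  intros x1 x2; rewrite HTbext; exact (HTb'ext (x1, x2)).
Qed.
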